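(* Let $n\geq 5$, let $5\leq s\leq n$, and let $\alpha_2,\dots,\alpha_n\in\mathbb{C}$ with $\alpha_2=\cdots=\alpha_{s-1}=0$ and $\alpha_s\neq0$. Then the transposed Poisson algebra $\mathbf{TP}(\alpha_2,\dots,\alpha_n)$ is isomorphic to $\mathbf{TP}(\alpha_2',\dots,\alpha_n')$ where $\alpha_s'=1$, $\alpha_{2s-3}'=\alpha$ for some $\alpha\in\mathbb{C}$ (this entry present only when $2s-3\leq n$), and all other $\alpha_i'=0$.
   Context: $\mu_0^n$ is the complex commutative associative algebra with basis $\{e_1,\dots,e_n\}$ and $e_i\cdot e_j=e_{i+j}$ for $2\leq i+j\leq n$, other products zero. For $\alpha_2,\dots,\alpha_n\in\mathbb{C}$, $\mathbf{TP}(\alpha_2,\dots,\alpha_n)$ denotes $\mu_0^n$ with its associative product together with the bracket $[e_i,e_j]=(j-i)\sum_{t=i+j-1}^{n}\alpha_{t-i-j+3}e_t$ for $3\leq i+j\leq n+1$, other brackets of basis elements zero. Isomorphisms preserve both operations. *)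

(* The complex numbers are modelled as R[i] = complex R
   for an arbitrary R : realType (a complete archimedean ordered field,
   i.e. a copy of the real numbers), from mathcomp-real-closed's complex.v. *)
From HB Require Import structures.
From mathcomp Require Import all_boot all_order all_algebra.
From mathcomp Require Import complex.
From mathcomp Require Import reals.
Set Implicit Arguments. Unset Strict Implicit. Unset Printing Implicit Defensive.
Import Order.TTheory GRing.Theory Num.Theory.
Local Open Scope ring_scope.

(* Elements of the n-dimensional algebra are row vectors of coordinates in
   the basis e_1, ..., e_n; the basis vector e_k (1 <= k <= n) corresponds to
   the coordinate index k-1 : 'I_n. *)

(* Associative product of mu_0^n:  e_I * e_J = e_(I+J) if I+J <= n, else 0.
   In 0-based indices i = I-1, j = J-1, k = K-1: K = I+J  <->  k = i+j+1. *)
Definition mu0_mul (C : pzRingType) (n : nat) (x y : 'rV[C]_n) : 'rV[C]_n :=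
  \row_(k < n) \sum_(i < n) \sum_(j < n)
     (if (i + j + 1 == k)%N then x 0 i * y 0 j else 0).

(* Structure constants of the bracket of TP(alpha_2,...,alpha_n):
   [e_I, e_J] = (J - I) * sum_{T = I+J-1}^{n} alpha_(T-I-J+3) e_T
   for 3 <= I+J <= n+1, other brackets zero.
   Coefficient of e_T (0-based: i,j,t) is (j - i) * alpha (t - i - j + 2)
   when i + j + 1 <= t (this forces I+J <= n+1; the case I+J = 2 has J-I = 0).
   alpha : nat -> C, only the values alpha 2, ..., alpha n matter. *)
Definition tp_coef (C : pzRingType) (alpha : nat -> C) (i j t : nat) : C :=
  if (i + j + 1 <= t)%N then ((j%:R - i%:R) * alpha (t - i - j + 2)%N) else 0.

Definition tp_bracket (C : pzRingType) (n : nat) (alpha : nat -> C)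
    (x y : 'rV[C]_n) : 'rV[C]_n :=
  \row_(t < n) \sum_(i < n) \sum_(j < n) x 0 i * y 0 j * tp_coef alpha i j t.

Definition TP_isomorphic (C : comUnitRingType) (n : nat) (alpha beta : nat -> C) : Prop :=
  exists A : 'M[C]_n, A \in unitmx /\
    (forall x y : 'rV[C]_n, mu0_mul (x *m A) (y *m A) = mu0_mul x y *m A) /\
    (forall x y : 'rV[C]_n,
        tp_bracket beta (x *m A) (y *m A) = tp_bracket alpha x y *m A).
Arguments TP_isomorphic {C} n alpha beta.

From HB Require Import structures.
From mathcomp Require Import all_boot all_order all_algebra.
From mathcomp Require Import complex.
From mathcomp Require Import reals.
From mathcomp Require Import zify ring.
Set Implicit Arguments. Unset Strict Implicit. Unset Printing Implicit Defensive.
Import Order.TTheory GRing.Theory Num.Theory.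
Local Open Scope ring_scope.

(* Identify e_k with X^k, so that mu_0^n becomes X F[X] / (X^(n+1)), and put
   W_alpha := sum_k alpha_(k+2) X^k; the bracket of TP(alpha) is then
   [f, g] = W_alpha (f g' - f' g).  The substitution X |-> p = X r with
   r(0) <> 0 is an automorphism of mu_0^n, and it turns the Wronskian of f and g
   into p' (W(f, g) o p).  As Wronskians of elements are divisible by X^2, it
   maps TP(alpha) onto TP(beta) as soon as W_alpha o p = W_beta p' mod X^(n-1).
   With W_alpha = X^m U, m = s - 2 and U(0) = alpha_s, this is the formal
   normal form problem r^m U(X r) = (1 + a X^(m-1)) (X r)', solved order by
   order: r(0) is an (m-1)-th root of 1/alpha_s, and replacing r by r + b X^j
   (j > 0) changes the coefficient of X^j of the defect by (m - j - 1) b, so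
   every order is corrected through r except the resonant one j = m - 1, which
   is corrected through a. *)

Lemma comp_polyXn (R : comNzRingType) N (p : {poly R}) : 'X^N \Po p = p ^+ N.
Proof. by rewrite rmorphXn /= comp_polyX. Qed.

Lemma comp_polyB_factor (R : comNzRingType) (V q1 q2 : {poly R}) :
  q1.[0] = q2.[0] ->
  exists2 T, (V \Po q1) - (V \Po q2) = (q1 - q2) * T & T.[0] = V^`().[q2.[0]].
Proof.
move=> q12; elim/poly_ind: V => [|V d [T hT hT0]].
  by exists 0; rewrite ?comp_poly0 ?deriv0 ?horner0 ?subrr ?mulr0.
exists (T * q1 + (V \Po q2)).
  by rewrite !comp_poly_MXaddC -[V \Po q1](subrK (V \Po q2)) hT; ring.
by rewrite derivMXaddC !hornerE horner_comp hT0 q12 addrC.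
Qed.

Section XadicDivisibility.
Variable F : fieldType.
Implicit Types (f g p : {poly F}) (N : nat).

Lemma dvdXE f : ('X %| f) = (f.[0] == 0).
Proof. by rewrite -[X in X %| _]subr0 dvdp_XsubCl rootE. Qed.

Lemma dvdX_coef0 f : 'X %| f -> f`_0 = 0.
Proof. by rewrite dvdXE horner_coef0 => /eqP. Qed.

Lemma dvdXnP N f : reflect (forall k, (k < N)%N -> f`_k = 0) ('X^N %| f).
Proof.
apply: (iffP (dvdpP _ _)) => [[q ->] k hk | hf]; first by rewrite coefMXn hk.
exists (drop_poly N f); rewrite -[LHS](poly_take_drop N) addrC.
suff -> : take_poly N f = 0 by rewrite addr0.
by apply/polyP => k; rewrite coef_take_poly coef0; case: ifP => // /hf.
Qed.

Lemma dvdXnS N f : 'X^N %| f -> 'X^(N.+1) %| f - (f`_N)%:P * 'X^N.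
Proof.
move/dvdXnP=> hf; apply/dvdXnP => k; rewrite ltnS coefB coefCM coefXn leq_eqVlt.
case/predU1P=> [->|hk]; first by rewrite eqxx mulr1 subrr.
by rewrite ltn_eqF // mulr0 subr0 hf.
Qed.

Lemma dvdXnS_perturb N (D D' : {poly F}) (l : F) :
  'X^N %| D -> 'X^(N.+1) %| D' - D - l%:P * 'X^N -> l = - D`_N ->
  'X^(N.+1) %| D'.
Proof.
move=> hD + hl; rewrite hl => hD'; have := dvdXnS hD; rewrite -(dvdp_addr _ hD').
by rewrite polyCN mulNr opprK; congr (_ %| _); ring.
Qed.

Lemma dvdXn_deriv N f : 'X^(N.+1) %| f -> 'X^N %| f^`().
Proof.
case/dvdpP=> q ->; rewrite derivM derivXn /= exprSr mulrA -mulr_natl mulrA.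
by rewrite mulrAC dvdp_add // dvdp_mull.
Qed.

Lemma dvdXn_comp N f p : 'X^N %| f -> 'X %| p -> 'X^N %| f \Po p.
Proof.
move=> hf hp; apply: dvdp_trans (dvdp_exp2r N hp) _.
by rewrite -comp_polyXn dvdp_comp_poly.
Qed.

Lemma dvdX_comp f p : 'X %| f -> 'X %| p -> 'X %| f \Po p.
Proof. by rewrite !dvdXE horner_comp => f0 /eqP ->. Qed.

End XadicDivisibility.

Section Wronskian.
Variable F : fieldType.
Implicit Types (f g p : {poly F}).

Definition wronskian f g := f * g^`() - f^`() * g.

Lemma wronskianBl f1 f2 g : wronskian (f1 - f2) g = wronskian f1 g - wronskian f2 g.
Proof. by rewrite /wronskian derivB; ring. Qed.

Lemma wronskianBr f g1 g2 : wronskian f (g1 - g2) = wronskian f g1 - wronskian f g2.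
Proof. by rewrite /wronskian derivB; ring. Qed.

Lemma wronskian_comp f g p :
  wronskian (f \Po p) (g \Po p) = p^`() * (wronskian f g \Po p).
Proof. by rewrite /wronskian !deriv_comp comp_polyB !comp_polyM; ring. Qed.

Lemma wronskianC f g : wronskian f g = - wronskian g f.
Proof. by rewrite /wronskian; ring. Qed.

Lemma dvdXn_wronskian N f g :
  'X^(N.+1) %| f -> 'X %| g -> 'X^(N.+1) %| wronskian f g.
Proof.
move=> hf hg; rewrite /wronskian dvdp_sub ?(dvdp_mulr _ hf) //.
by rewrite exprSr dvdp_mul ?dvdXn_deriv.
Qed.

Lemma dvdX2_wronskian f g : 'X %| f -> 'X %| g -> 'X^2 %| wronskian f g.
Proof.
case/dvdpP=> f1 ->; case/dvdpP=> g1 ->; apply/dvdpP.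
exists (wronskian f1 g1); rewrite /wronskian !derivM derivX; ring.
Qed.

End Wronskian.

Section NormalForm.
Variables (F : numFieldType) (m : nat) (U : {poly F}) (c : F).
Hypothesis m_ge2 : (2 <= m)%N.
Hypothesis c_root : c ^+ m.-1 * U.[0] = 1.
Implicit Types (r : {poly F}) (a b : F).

Let expr0_pred_m : (0 : F) ^+ m.-1 = 0.
Proof. by rewrite expr0n -subn1 subn_eq0 leqNgt m_ge2. Qed.

Definition nf_defect r a :=
  r ^+ m * (U \Po ('X * r)) - (1 + a%:P * 'X^(m.-1)) * ('X * r)^`().

Lemma nf_root_neq0 : c != 0.
Proof.
by apply: contra_eq_neq c_root => ->; rewrite expr0_pred_m mul0r eq_sym oner_eq0.
Qed.

Lemma horner0_derivXM r : (('X * r)^`()).[0] = r.[0].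
Proof. by rewrite derivM derivX !hornerE. Qed.

Lemma dvdX_nf_defect r a : r.[0] = c -> 'X %| nf_defect r a.
Proof.
move=> r0; rewrite dvdXE /nf_defect !hornerE horner_comp !hornerE horner0_derivXM r0.
rewrite expr0_pred_m mulr0 addr0 mul1r.
by rewrite -(prednK (ltnW m_ge2)) exprS -mulrA c_root mulr1 subrr.
Qed.

Lemma nf_defect_shift_a r a b : r.[0] = c ->
  'X^m %| nf_defect r (a + b) - nf_defect r a - (- (b * c))%:P * 'X^(m.-1).
Proof.
move=> r0; have -> : nf_defect r (a + b) - nf_defect r a - (- (b * c))%:P * 'X^(m.-1)
    = - (b%:P * 'X^(m.-1)) * (('X * r)^`() - c%:P).
  by rewrite /nf_defect polyCD polyCN polyCM; ring.
rewrite mulNr dvdpNr -[m in 'X^m](prednK (ltnW m_ge2)) exprSr dvdp_mul ?dvdp_mull //.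
by rewrite dvdXE !hornerE horner0_derivXM r0 subrr.
Qed.

Lemma nf_defect_shift_r r a b k : r.[0] = c ->
  'X^(k.+2) %| nf_defect (r + b%:P * 'X^(k.+1)) a - nf_defect r a
               - ((m%:R - k.+2%:R) * b)%:P * 'X^(k.+1).
Proof.
move=> r0; set r2 := r + _.
have r20 : r2.[0] = r.[0] by rewrite /r2 !hornerE expr0n mulr0 addr0.
have [S hS hS0] := comp_polyB_factor 'X^m r20.
have [|T hT _] := @comp_polyB_factor _ U ('X * r2) ('X * r); first by rewrite !hornerE.
rewrite !comp_polyXn in hS.
set Q := S * (U \Po ('X * r2)) + 'X * r ^+ m * T
         - (1 + a%:P * 'X^(m.-1)) * (k.+2)%:R%:P.
have hQ : nf_defect r2 a - nf_defect r a = b%:P * 'X^(k.+1) * Q.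
  have e1 : r2 ^+ m = r ^+ m + b%:P * 'X^(k.+1) * S.
    by rewrite -[LHS](subrK (r ^+ m)) hS /r2; ring.
  have e2 : U \Po ('X * r) = U \Po ('X * r2) - ('X * r2 - 'X * r) * T.
    by rewrite -hT; ring.
  have e3 : ('X * r2)^`() = ('X * r)^`() + (k.+2)%:R%:P * b%:P * 'X^(k.+1).
    rewrite /r2 mulrDr derivD mulrCA -exprS (derivM b%:P) derivC derivXn.
    by rewrite mul0r add0r -mulr_natl -polyC_natr; ring.
  by rewrite /nf_defect e1 e2 e3 /Q /r2; ring.
have hQ0 : Q.[0] = m%:R - k.+2%:R.
  rewrite /Q !hornerE horner_comp !hornerE hS0 r0 derivXn hornerMn hornerXn.
  by rewrite expr0_pred_m mulr0 addr0 mul1r mulrnAl c_root.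
rewrite hQ.
have -> : b%:P * 'X^(k.+1) * Q - ((m%:R - k.+2%:R) * b)%:P * 'X^(k.+1)
    = b%:P * 'X^(k.+1) * (Q - (m%:R - k.+2%:R)%:P) by rewrite polyCM; ring.
by rewrite exprSr dvdp_mul ?dvdp_mull // dvdXE hornerD hornerN hQ0 hornerC subrr.
Qed.

Lemma nf_defect_solvable k :
  exists r a, r.[0] = c /\ 'X^(k.+1) %| nf_defect r a.
Proof.
elim: k => [|k [r [a [r0 hD]]]].
  by exists c%:P, 0; rewrite hornerC expr1 dvdX_nf_defect ?hornerC.
set e := (nf_defect r a)`_(k.+1).
case: (eqVneq k.+2 m) => [km | km].
  exists r, (a + e / c); split => //.
  apply: (dvdXnS_perturb hD (l := - (e / c * c))).
    by have := nf_defect_shift_a a (e / c) r0; rewrite -km.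
  by rewrite divfK ?nf_root_neq0.
exists (r + (e / (k.+2%:R - m%:R))%:P * 'X^(k.+1)), a; split.
  by rewrite !hornerE expr0n mulr0 addr0.
apply: (dvdXnS_perturb hD (nf_defect_shift_r a _ k r0)).
by rewrite -opprB mulNr mulrC divfK // subr_eq0 eqr_nat.
Qed.

Lemma nf_conjugacy k : exists r a, r.[0] != 0 /\
  'X^(m + k.+1) %| ('X^m * U) \Po ('X * r)
                   - 'X^m * (1 + a%:P * 'X^(m.-1)) * ('X * r)^`().
Proof.
have [r [a [r0 hD]]] := nf_defect_solvable k.
exists r, a; split; first by rewrite r0 nf_root_neq0.
have -> : ('X^m * U) \Po ('X * r) - 'X^m * (1 + a%:P * 'X^(m.-1)) * ('X * r)^`()
    = 'X^m * nf_defect r a.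
  by rewrite /nf_defect comp_polyM comp_polyXn exprMn; ring.
by rewrite exprD dvdp_mul ?dvdpp.
Qed.

End NormalForm.

Section PolynomialModel.
Variables (F : fieldType) (n : nat).
Implicit Types (f g p r : {poly F}) (x y : 'rV[F]_n) (al be : nat -> F).

Definition poly_of_row x : {poly F} := \sum_(i < n) x 0 i *: 'X^(i.+1).
Definition row_of_poly f : 'rV[F]_n := \row_(k < n) f`_k.+1.

Lemma dvdX_poly_of_row x : 'X %| poly_of_row x.
Proof.
rewrite dvdXE horner_sum big1 // => i _.
by rewrite hornerZ hornerXn expr0n mulr0.
Qed.

Lemma coef_poly_of_row x (k : 'I_n) : (poly_of_row x)`_k.+1 = x 0 k.
Proof.
rewrite coef_sum (bigD1 k) //= big1 ?addr0 => [|i /negbTE neq_ik].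
  by rewrite coefZ coefXn eqxx mulr1.
by rewrite coefZ coefXn eqSS eq_sym [_ == _]neq_ik mulr0.
Qed.

Lemma row_of_poly_eq f g : 'X^(n.+1) %| f - g -> row_of_poly f = row_of_poly g.
Proof.
move/dvdXnP=> hfg; apply/rowP => k; apply/eqP; rewrite !mxE -subr_eq0 -coefB.
by rewrite hfg // ltnS.
Qed.

Lemma poly_of_rowK f : 'X %| f -> 'X^(n.+1) %| poly_of_row (row_of_poly f) - f.
Proof.
move=> hf; apply/dvdXnP => -[_|k]; rewrite coefB.
  by rewrite dvdX_coef0 ?dvdX_poly_of_row // dvdX_coef0 // subrr.
by rewrite ltnS => hk; rewrite (coef_poly_of_row _ (Ordinal hk)) mxE subrr.
Qed.

Lemma mu0_mulE x y : mu0_mul x y = row_of_poly (poly_of_row x * poly_of_row y).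
Proof.
apply/rowP => k; rewrite !mxE mulr_suml coef_sum; apply: eq_bigr => i _.
rewrite mulr_sumr coef_sum; apply: eq_bigr => j _.
rewrite -scalerAl -scalerAr scalerA coefZ -exprD coefXn.
have -> : (k.+1 == i.+1 + j.+1) = (i + j + 1 == k)%N by apply/eqP/eqP; lia.
by case: eqP; rewrite ?mulr1 ?mulr0.
Qed.

Lemma deriv_poly_of_row x :
  (poly_of_row x)^`() = \sum_(i < n) (x 0 i * i.+1%:R) *: 'X^i.
Proof.
rewrite raddf_sum; apply: eq_bigr => i _ /=.
by rewrite derivZ derivXn -scaler_nat scalerA.
Qed.

Lemma wronskian_poly_of_row x y :
  wronskian (poly_of_row x) (poly_of_row y) =
  \sum_(i < n) \sum_(j < n) (x 0 i * y 0 j * (j%:R - i%:R)) *: 'X^(i + j + 1).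
Proof.
rewrite /wronskian !deriv_poly_of_row /poly_of_row !mulr_suml -sumrB.
apply: eq_bigr => i _; rewrite !mulr_sumr -sumrB; apply: eq_bigr => j _.
rewrite -!scalerAl -!scalerAr !scalerA -!exprD addSn addnS addn1 -scalerBl.
by congr (_ *: _); rewrite -(addn1 i) -(addn1 j) !natrD; ring.
Qed.

Definition tp_weight (al : nat -> F) : {poly F} := \poly_(k < n) al (k + 2)%N.

(* [tp_coef] has no alpha_2 term, while [al 2] is the constant coefficient of
   [tp_weight al]. *)
Lemma tp_bracketE al x y : al 2%N = 0 ->
  tp_bracket al x y =
  row_of_poly (tp_weight al * wronskian (poly_of_row x) (poly_of_row y)).
Proof.
move=> al2; apply/rowP => t; rewrite !mxE wronskian_poly_of_row mulr_sumr.
rewrite coef_sum; apply: eq_bigr => i _; rewrite mulr_sumr coef_sum.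
apply: eq_bigr => j _; rewrite -scalerAr coefZ coefMXn coef_poly /tp_coef.
have ht := ltn_ord t.
case: (leqP (i + j + 1) t) => le_ijt.
  rewrite ifF; last by lia.
  rewrite ifT; last by lia.
  have -> : (t.+1 - (i + j + 1) + 2 = t - i - j + 2)%N by lia.
  by rewrite mulrA.
case: (ltnP t.+1 (i + j + 1)) => lt_tij; first by rewrite !mulr0.
rewrite ifT; last by lia.
have -> : (t.+1 - (i + j + 1) + 2 = 2)%N by lia.
by rewrite al2 !mulr0.
Qed.

Definition subst_mx p : 'M[F]_n := \matrix_(i, k) (p ^+ i.+1)`_k.+1.

Lemma mul_subst_mx x p : x *m subst_mx p = row_of_poly (poly_of_row x \Po p).
Proof.
apply/rowP => k; rewrite !mxE linear_sum coef_sum; apply: eq_bigr => i _.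
by rewrite mxE linearZ /= comp_polyXn coefZ.
Qed.

Lemma subst_mx_unit r : r.[0] != 0 -> subst_mx ('X * r) \in unitmx.
Proof.
move=> r0; rewrite unitmxE -det_tr det_trig.
  rewrite unitfE; apply/prodf_neq0 => i _.
  by rewrite !mxE exprMn coefXnM ltnn subnn -horner_coef0 horner_exp expf_neq0.
by apply/is_trig_mxP => i j lt_ij; rewrite !mxE exprMn coefXnM ifT // ltnS.
Qed.

Lemma subst_mu0_mul p x y : 'X %| p ->
  mu0_mul (x *m subst_mx p) (y *m subst_mx p) = mu0_mul x y *m subst_mx p.
Proof.
move=> hp; rewrite !mul_subst_mx !mu0_mulE; apply: row_of_poly_eq.
set X := poly_of_row x; set Y := poly_of_row y.
have hXp : 'X %| X \Po p by rewrite dvdX_comp ?dvdX_poly_of_row.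
have hYp : 'X %| Y \Po p by rewrite dvdX_comp ?dvdX_poly_of_row.
have hXY : 'X %| X * Y by rewrite dvdp_mulr ?dvdX_poly_of_row.
set X1 := poly_of_row _; set Y1 := poly_of_row _; set Z1 := poly_of_row _.
have -> : X1 * Y1 - (Z1 \Po p) =
    (X1 - (X \Po p)) * Y1 + (X \Po p) * (Y1 - (Y \Po p)) - ((Z1 - X * Y) \Po p).
  by rewrite comp_polyB comp_polyM; ring.
rewrite dvdp_sub ?dvdp_add ?dvdXn_comp ?poly_of_rowK //.
  exact: dvdp_mulr _ (poly_of_rowK hXp).
exact: dvdp_mull _ (poly_of_rowK hYp).
Qed.

Lemma subst_tp_bracket al be p x y :
  al 2%N = 0 -> be 2%N = 0 -> 'X %| p ->
  'X^(n.-1) %| tp_weight al \Po p - tp_weight be * p^`() ->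
  tp_bracket be (x *m subst_mx p) (y *m subst_mx p) =
  tp_bracket al x y *m subst_mx p.
Proof.
move=> al2 be2 hp hW; rewrite !tp_bracketE // !mul_subst_mx.
apply: row_of_poly_eq.
set X := poly_of_row x; set Y := poly_of_row y.
have hXp : 'X %| X \Po p by rewrite dvdX_comp ?dvdX_poly_of_row.
have hYp : 'X %| Y \Po p by rewrite dvdX_comp ?dvdX_poly_of_row.
have hWXY : 'X^2 %| wronskian X Y by rewrite dvdX2_wronskian ?dvdX_poly_of_row.
have hZ : 'X %| tp_weight al * wronskian X Y.
  by rewrite dvdp_mull // (dvdp_trans _ hWXY) // exprS dvdp_mulIl.
set X1 := poly_of_row _; set Y1 := poly_of_row _; set Z1 := poly_of_row _.
have -> : tp_weight be * wronskian X1 Y1 - (Z1 \Po p) =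
    tp_weight be * (wronskian (X1 - (X \Po p)) Y1 - wronskian (Y1 - (Y \Po p)) (X \Po p))
    - ((tp_weight al \Po p) - tp_weight be * p^`()) * (wronskian X Y \Po p)
    - ((Z1 - tp_weight al * wronskian X Y) \Po p).
  rewrite (wronskianC (Y1 - _)) wronskianBl wronskianBr wronskian_comp.
  by rewrite (comp_polyB Z1) (comp_polyM (tp_weight al)); ring.
rewrite !dvdp_sub //.
- by rewrite dvdp_mull // dvdp_sub // dvdXn_wronskian ?poly_of_rowK ?dvdX_poly_of_row.
- have le_n : (n.+1 <= n.-1 + 2)%N by rewrite addn2; case: (n).
  apply: dvdp_trans (dvdp_exp2l _ le_n) _.
  by rewrite exprD dvdp_mul // dvdXn_comp.
- by rewrite dvdXn_comp ?poly_of_rowK.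
Qed.

Lemma TP_isomorphic_subst al be r :
  al 2%N = 0 -> be 2%N = 0 -> r.[0] != 0 ->
  'X^(n.-1) %| tp_weight al \Po ('X * r) - tp_weight be * ('X * r)^`() ->
  TP_isomorphic n al be.
Proof.
move=> al2 be2 r0 hW; have hp : 'X %| 'X * r by apply: dvdp_mulIl.
exists (subst_mx ('X * r)); split; first exact: subst_mx_unit.
by split=> x y; [apply: subst_mu0_mul | apply: subst_tp_bracket].
Qed.

Lemma tp_weight_vanishing al m :
  (forall k, (2 <= k)%N -> (k < m + 2)%N -> al k = 0) ->
  tp_weight al = 'X^m * \poly_(k < n - m) al (k + m + 2)%N.
Proof.
move=> al0; apply/polyP => k; rewrite coefXnM !coef_poly.
case: (ltnP k m) => [lt_km | le_mk]; first by case: ifP => // _; apply: al0; lia.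
have -> : (k - m < n - m)%N = (k < n)%N by apply/idP/idP; lia.
by rewrite subnK.
Qed.

Definition tp_normal_form (s : nat) (a : F) (k : nat) : F :=
  if k == s then 1 else if (k == (2 * s - 3)%N) && (2 * s - 3 <= n)%N then a else 0.

Lemma tp_weight_normal_form m a : (2 <= m)%N ->
  'X^(n.-1) %| tp_weight (tp_normal_form (m + 2) a)
               - 'X^m * (1 + a%:P * 'X^(m.-1)).
Proof.
move=> m_ge2; apply/dvdXnP => k lt_kn.
rewrite coefB coef_poly mulrDr mulr1 mulrCA -exprD coefD coefCM !coefXn.
rewrite ifT; last by lia.
rewrite /tp_normal_form eqn_add2r.
have [-> | _] := eqVneq k m.
  have -> : (m == m + m.-1)%N = false by apply/negbTE/eqP; lia.
  by rewrite mulr0 addr0 subrr.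
have [ek | neq_k] := eqVneq k (m + m.-1)%N.
  have -> : (k + 2 == 2 * (m + 2) - 3)%N && (2 * (m + 2) - 3 <= n)%N.
    by apply/andP; split; [apply/eqP|]; lia.
  by rewrite add0r mulr1 subrr.
have -> : (k + 2 == 2 * (m + 2) - 3)%N = false by apply/negbTE/eqP; lia.
by rewrite mulr0 addr0 subrr.
Qed.

End PolynomialModel.

Theorem mainTheorem10 (R : realType) (n s : nat) (alpha : nat -> R[i])
    (hn : (5 <= n)%N) (hs5 : (5 <= s)%N) (hsn : (s <= n)%N)
    (hzero : forall k : nat, (2 <= k)%N -> (k < s)%N -> alpha k = 0)
    (hs : alpha s != 0) :
  exists a : R[i],
    TP_isomorphic n alpha
      (fun k : nat => if k == s then 1
                      else if (k == (2 * s - 3)%N) && (2 * s - 3 <= n)%N then a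
                      else 0).
Proof.
have [m def_s] : exists m, s = (m + 2)%N by exists (s - 2)%N; lia.
subst s; have m_ge2 : (2 <= m)%N by lia.
set U := \poly_(k < n - m) alpha (k + m + 2)%N.
have U0 : U.[0] = alpha (m + 2)%N.
  by rewrite horner_coef0 coef_poly ifT; [congr alpha; lia | lia].
set c := (m.-1).-root (U.[0])^-1.
have c_root : c ^+ m.-1 * U.[0] = 1 by rewrite rootCK ?mulVf ?U0 //; lia.
have [r [a [r0 hconj]]] := nf_conjugacy m_ge2 c_root (n - m - 2).
exists a; apply: (TP_isomorphic_subst (be := tp_normal_form n (m + 2) a) _ _ r0).
- by apply: hzero; lia.
- by rewrite /tp_normal_form !ifF //; apply/negbTE/eqP; lia.
rewrite (tp_weight_vanishing _ hzero) -/U.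
rewrite -(subrK ('X^m * (1 + a%:P * 'X^(m.-1))) (tp_weight _ _)) mulrDl opprD addrA addrAC.
rewrite dvdp_sub ?dvdp_mulr ?tp_weight_normal_form //.
by have -> : n.-1 = (m + (n - m - 2).+1)%N by lia.
Qed.
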